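(* Let $\ell:\mathcal{H}\times\mathcal{Z}\times\mathcal{Z}\to[0,B]$ be a $B$-bounded pairwise loss, let $z_1,\dots,z_n$ be a stream, and let buffers of size $s$ be maintained by the RS-x algorithm (described below). Assume $\mathcal{R}_s(\ell\circ\mathcal{H})=C_d\cdot O(\sqrt{1/s})$. Then for any fixed $h\in\mathcal{H}$ and any $t\in[1,n-1]$, with probability at least $1-\delta$ over the random variables used to update the buffer until time $t$, \[ \hat{\mathcal{L}}^{\mathrm{buf}}_t(h)\le\hat{\mathcal{L}}_t(h)+C_d\cdot O\!\left(\sqrt{\frac{\log\frac1\delta}{s}}\right). \]
   Context: All-pairs penalty $\hat{\mathcal{L}}_t(h)=\frac1{t-1}\sum_{\tau=1}^{t-1}\ell(h,z_t,z_\tau)$; buffer penalty $\hat{\mathcal{L}}^{\mathrm{buf}}_t(h)=\frac1{|B_t|}\sum_{z\in B_t}\ell(h,z_t,z)$, where $B_t$ is the buffer after processing $z_1,\dots,z_{t-1}$. RS-x update with the point $z_t$ at step $t$: if $|B|<s$, add $z_t$; else if $t=s+1$, replace $B$ by $s$ points sampled uniformly with replacement from $B\cup\{z_t\}$; else independently replace each buffer entry by $z_t$ with probability $1/t$. $\mathcal{R}_s(\ell\circ\mathcal{H})=\mathbb{E}[\sup_h\frac1s\sum_{j=1}^s\epsilon_j\ell(h,z,z_j)]$; $C_d$ is its dependence on the input dimension $d$; $O(\cdot)$ hides constants such as $B$. *)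

From HB Require Import structures.
From mathcomp Require Import all_boot all_order all_algebra.
From mathcomp Require Import all_classical all_reals all_analysis.
Set Implicit Arguments. Unset Strict Implicit. Unset Printing Implicit Defensive.
Import Order.TTheory GRing.Theory Num.Theory.
Local Open Scope ring_scope.

Definition dist (R : Type) (A : Type) := seq (R * A).

Section Dist.
Variable R : realType.

Definition dret (A : Type) (a : A) : dist R A := [:: (1, a)].

Definition dbind (A B : Type) (d : dist R A) (f : A -> dist R B) : dist R B :=
  flatten [seq [seq (p.1 * q.1, q.2) | q <- f p.2] | p <- d].

Definition dprob (A : Type) (d : dist R A) (E : A -> bool) : R :=
  \sum_(p <- d) (if E p.2 then p.1 else 0).

Variable Z : Type.

(* each buffer entry independently replaced by zt with probability 1/tau *)
Definition rsx_coins (tau : nat) (zt : Z) (b : seq Z) : dist R (seq Z) :=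
  foldr (fun x acc => dbind acc (fun rest =>
           [:: (tau%:R^-1, zt :: rest); (1 - tau%:R^-1, x :: rest)]))
        (dret [::]) b.

(* s points sampled uniformly with replacement from the list b ++ [:: zt]
   (of size s+1) *)
Definition rsx_resample (s : nat) (zt : Z) (b : seq Z) : dist R (seq Z) :=
  [seq ((s.+1)%:R ^- s, [seq nth zt (rcons b zt) (f j) | j <- enum 'I_s])
  | f : {ffun 'I_s -> 'I_s.+1} <- enum {ffun 'I_s -> 'I_s.+1}].

Definition rsx_step (s tau : nat) (zt : Z) (b : seq Z) : dist R (seq Z) :=
  if (size b < s)%N then dret (rcons b zt)
  else if tau == s.+1 then rsx_resample s zt b
  else rsx_coins tau zt b.

(* distribution of the buffer after processing z_1, ..., z_k
   (the stream is z : nat -> Z, indexed from 1) *)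
Fixpoint rsx_buffer (s : nat) (z : nat -> Z) (k : nat) : dist R (seq Z) :=
  match k with
  | 0 => dret [::]
  | k'.+1 => dbind (rsx_buffer s z k') (rsx_step s k (z k))
  end.

Variable H : Type.

Definition allpairs_risk (l : H -> Z -> Z -> R) (z : nat -> Z) (t : nat)
  (h : H) : R :=
  (t.-1)%:R^-1 * \sum_(1 <= tau < t) l h (z t) (z tau).

Definition buffer_risk (l : H -> Z -> Z -> R) (zt : Z) (b : seq Z)
  (h : H) : R :=
  (size b)%:R^-1 * \sum_(x <- b) l h zt x.

End Dist.

Section Rademacher.
Context {R : realType} {d : measure_display} {Z : measurableType d}.
Variable D : probability Z R.

(* iterated expectation over k i.i.d. draws from D *)
Fixpoint iter_expect (k : nat) (F : seq Z -> R) : R :=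
  match k with
  | 0 => F [::]
  | k'.+1 => Rintegral D setT (fun x => iter_expect k' (fun xs => F (x :: xs)))
  end.

(* R_s(l o H) = E_{z, z_1..z_s ~ D, eps} [ sup_h (1/s) sum_j eps_j l(h,z,z_j) ],
   eps uniform on {-1,1}^s *)
Definition rademacher (H : Type) (l : H -> Z -> Z -> R) (s : nat) : R :=
  iter_expect s.+1 (fun zs =>
    match zs with
    | [::] => 0
    | z :: zs' =>
      (2 ^ s)%:R^-1 * \sum_(eps : {ffun 'I_s -> bool})
        sup [set (s%:R^-1 * \sum_(j < s)
                   (-1) ^+ (eps j) * l h z (nth z zs' j)) | h in [set: H]]
    end).
End Rademacher.

From HB Require Import structures.
From mathcomp Require Import all_boot all_order all_algebra.
From mathcomp Require Import all_classical all_reals all_analysis.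
From mathcomp Require Import ring lra.
Import Order.TTheory GRing.Theory Num.Theory.
Set Implicit Arguments. Unset Strict Implicit. Unset Printing Implicit Defensive.
Local Open Scope ring_scope.

(** As long as [t - 1 <= s] the buffer is the whole
    history and the two penalties coincide.  Afterwards the RS-x buffer is
    distributed exactly like [s] independent uniform draws from
    [z_1, ..., z_(t-1)]: the resampling step at time [s + 1] creates this
    distribution, and each coin step keeps it, because replacing every entry
    by [z_t] with probability [1/t] turns a uniform draw among [t - 1] points
    into a uniform draw among [t] points.  Chernoff's method with the bound
    [exp u <= 1 + u + 2 u^2] (for [u <= 1/2]) then yields deviation [eps] with
    probability at least [1 - exp (- s eps^2 / (8 B^2))], and
    [eps = 3 B sqrt (log (1/delta) / s)] makes this at least [1 - delta]. *)

Section FiniteDistributions.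
Variable R : realType.

Definition dexp (A : Type) (d : dist R A) (F : A -> R) : R :=
  \sum_(p <- d) p.1 * F p.2.

Definition dist_on (A : Type) (Q : pred A) (d : dist R A) : bool :=
  all (fun p => (0 <= p.1) && Q p.2) d.

Lemma dexp_bind (A B : Type) (d : dist R A) (f : A -> dist R B) F :
  dexp (dbind d f) F = dexp d (fun a => dexp (f a) F).
Proof.
elim: d => [|p d IH]; first by rewrite /dexp /dbind !big_nil.
rewrite {1}/dexp /dbind /= big_cat -/(dbind d f) -/(dexp (dbind d f) F) IH.
rewrite /dexp big_cons big_map big_distrr; congr (_ + _).
by apply: eq_bigr => q _; rewrite /= mulrA.
Qed.

Lemma dexpZ (A : Type) (d : dist R A) (c : R) F :
  dexp d (fun a => c * F a) = c * dexp d F.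
Proof. by rewrite /dexp big_distrr; apply: eq_bigr => p _; rewrite mulrCA. Qed.

Lemma dexp_dret (A : Type) (a : A) F : dexp (dret R a) F = F a.
Proof. by rewrite /dexp big_cons big_nil addr0 mul1r. Qed.

Lemma dprob_dret (A : Type) (a : A) (E : A -> bool) :
  dprob (dret R a) E = if E a then 1 else 0.
Proof. by rewrite /dprob big_cons big_nil addr0. Qed.

Lemma dist_on_dret (A : Type) (Q : pred A) (a : A) : Q a -> dist_on Q (dret R a).
Proof. by rewrite /dist_on /= ler01 andbT => ->. Qed.

Lemma dist_on_bind (A B : Type) (Q : pred A) (Q' : pred B) d (f : A -> dist R B) :
  dist_on Q d -> (forall a, Q a -> dist_on Q' (f a)) -> dist_on Q' (dbind d f).
Proof.
move=> Hd Hf; elim: d Hd => [|p d IH] //= /andP[/andP[p_ge0 Qp] Hd].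
rewrite /dist_on /dbind /= all_cat; move: IH; rewrite /dist_on /dbind => -> //.
rewrite andbT all_map; apply: sub_all (Hf _ Qp) => q /andP[q_ge0 Q'q] /=.
by rewrite Q'q andbT mulr_ge0.
Qed.

Lemma eq_dexp_on (A : Type) (Q : pred A) d (F G : A -> R) :
  dist_on Q d -> (forall a, Q a -> F a = G a) -> dexp d F = dexp d G.
Proof.
move=> Hd FG; elim: d Hd => [|p d IH] /=; first by rewrite /dexp !big_nil.
by case/andP=> /andP[_ Qp] Hd; rewrite /dexp !big_cons -!/(dexp _ _) IH // FG.
Qed.

Lemma dprob_markov (A : Type) (Q : pred A) d (E : A -> bool) (G : A -> R) :
  dist_on Q d -> (forall a, Q a -> 0 <= G a) ->
  (forall a, Q a -> ~~ E a -> 1 <= G a) ->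
  dexp d (fun=> 1) - dexp d G <= dprob d E.
Proof.
move=> Hd G_ge0 G_ge1; elim: d Hd => [|p d IH] /=.
  by rewrite /dexp /dprob !big_nil subr0.
case/andP=> /andP[p_ge0 Qp] Hd.
rewrite /dexp /dprob !big_cons -!/(dexp _ _) -/(dprob _ _).
rewrite opprD addrACA lerD ?IH // mulr1.
case: (boolP (E p.2)) => Ep; first by rewrite lerBlDr lerDl mulr_ge0 ?G_ge0.
by rewrite subr_le0 -{1}(mulr1 p.1) ler_wpM2l ?G_ge1.
Qed.

End FiniteDistributions.

Section Mean.
Variables (R : realType) (A : Type).
Implicit Types (w : seq A) (f g : A -> R).

Definition mean w f : R := (size w)%:R^-1 * \sum_(x <- w) f x.

Lemma meanD w f g : mean w (fun x => f x + g x) = mean w f + mean w g.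
Proof. by rewrite /mean big_split mulrDr. Qed.

Lemma meanZ w (c : R) f : mean w (fun x => c * f x) = c * mean w f.
Proof. by rewrite /mean -big_distrr mulrCA. Qed.

Lemma mean_cst w (c : R) : (0 < size w)%N -> mean w (fun=> c) = c.
Proof.
move=> w_gt0; rewrite /mean big_const_seq count_predT iter_addr addr0.
by rewrite -[c *+ _]mulr_natl mulrA mulVf ?mul1r // pnatr_eq0 -lt0n.
Qed.

Lemma ler_mean w f g : (forall x, f x <= g x) -> mean w f <= mean w g.
Proof. by move=> fg; rewrite ler_wpM2l ?invr_ge0 ?ler0n // ler_sum. Qed.

Lemma mean_ge0 w f : (forall x, 0 <= f x) -> 0 <= mean w f.
Proof. by move=> f_ge0; rewrite mulr_ge0 ?invr_ge0 ?ler0n // sumr_ge0. Qed.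

Lemma mean_le w f (B : R) :
  (0 < size w)%N -> (forall x, f x <= B) -> mean w f <= B.
Proof. by move=> w_gt0 fB; rewrite -(mean_cst B w_gt0) ler_mean. Qed.

Lemma mean_rcons w a g : (0 < size w)%N ->
  mean (rcons w a) g =
    (size w).+1%:R^-1 * g a + (1 - (size w).+1%:R^-1) * mean w g.
Proof.
move=> w_gt0; rewrite /mean size_rcons -cats1 big_cat big_seq1 /= -natr1.
have w_neq0 : (size w)%:R != 0 :> R by rewrite pnatr_eq0 -lt0n.
have wS_neq0 : (size w)%:R + 1 != 0 :> R by rewrite natr1 pnatr_eq0.
by field; rewrite w_neq0 wS_neq0.
Qed.

Lemma prod_expR_mean w f (lam c : R) : (0 < size w)%N ->
  \prod_(x <- w) expR (lam * (f x - c)) =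
    expR (lam * (size w)%:R * (mean w f - c)).
Proof.
move=> w_gt0; rewrite -expR_sum; congr expR.
rewrite -big_distrr big_split /= sumrN big_const_seq count_predT iter_addr addr0.
have w_neq0 : (size w)%:R != 0 :> R by rewrite pnatr_eq0 -lt0n.
by rewrite /mean -mulr_natl; field.
Qed.

End Mean.

Lemma expR_le_quadratic (R : realType) (u : R) :
  u <= 1 / 2 -> expR u <= 1 + u + 2 * u ^+ 2.
Proof.
move=> u_le; have pos : 0 < 1 - u by lra.
have expRu_le : expR u * (1 - u) <= 1.
  rewrite -[leRHS](expRxMexpNx_1 u) ler_wpM2l ?expR_ge0 //.
  exact: expR_ge1Dx.
have : 1 <= (1 - u) * (1 + u + 2 * u ^+ 2).
  have -> : (1 - u) * (1 + u + 2 * u ^+ 2) = 1 + u ^+ 2 * (1 - 2 * u) by ring.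
  by rewrite lerDl mulr_ge0 ?sqr_ge0 //; lra.
by move/(le_trans expRu_le); rewrite mulrC ler_pM2l.
Qed.

(* Hoeffding's lemma for an empirical mean, in the weak form needed here. *)
Lemma mean_expR_le (R : realType) (A : Type) (w : seq A) (f : A -> R) (B lam : R) :
  (0 < size w)%N -> (forall x, 0 <= f x <= B) -> 0 <= lam -> lam * B <= 1 / 2 ->
  mean w (fun x => expR (lam * (f x - mean w f))) <= expR (2 * lam ^+ 2 * B ^+ 2).
Proof.
move=> w_gt0 f_bnd lam_ge0 lamB; set m := mean w f.
have m_ge0 : 0 <= m by apply: mean_ge0 => x; case/andP: (f_bnd x).
have m_le : m <= B by apply: mean_le => // x; case/andP: (f_bnd x).
set c2 := 2 * lam ^+ 2 * B ^+ 2.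
have pointwise x : expR (lam * (f x - m)) <= 1 + lam * (f x - m) + c2.
  have /andP[fx_ge0 fx_le] := f_bnd x.
  apply: le_trans (expR_le_quadratic _) _.
    by apply: le_trans lamB; rewrite ler_wpM2l //; lra.
  rewrite lerD2l /c2 exprMn -mulrA ler_wpM2l // ler_wpM2l ?sqr_ge0 //.
  rewrite -subr_ge0.
  have -> : B ^+ 2 - (f x - m) ^+ 2 = (B - (f x - m)) * (B + (f x - m)) by ring.
  by apply: mulr_ge0; lra.
apply: le_trans (ler_mean w pointwise) _.
rewrite !meanD meanZ meanD !mean_cst // subrr mulr0 addr0.
by apply: le_trans (expR_ge1Dx _); rewrite addrC.
Qed.

Section SamplingWithReplacement.
Variables (R : realType) (A : Type) (s : nat) (w : seq A) (d : dist R (seq A)).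
Hypothesis s_gt0 : (0 < s)%N.
Hypothesis w_gt0 : (0 < size w)%N.
Hypothesis d_size : dist_on (fun b => size b == s) d.
Hypothesis dexp_prod : forall g : A -> R,
  dexp d (fun b => \prod_(x <- b) g x) = mean w g ^+ s.

Lemma dexp_mass : dexp d (fun=> 1) = 1.
Proof.
transitivity (dexp d (fun b => \prod_(x <- b) (1 : R))).
  by apply: eq_dexp_on d_size _ => b _; rewrite big1.
by rewrite dexp_prod mean_cst // expr1n.
Qed.

Lemma dprob_mean_le_mean_add (f : A -> R) (B eps x : R) :
  (forall a, 0 <= f a <= B) -> 0 <= eps ->
  8 * B ^+ 2 * x <= s%:R * eps ^+ 2 ->
  1 - expR (- x) <= dprob d (fun b => mean b f <= mean w f + eps).
Proof.
move=> f_bnd eps_ge0 eps_large; set m := mean w f.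
have m_ge0 : 0 <= m by apply: mean_ge0 => a; case/andP: (f_bnd a).
have [B_le_eps | eps_lt_B] := leP B eps.
  apply: le_trans (dprob_markov (G := fun=> 0) d_size _ _) => //.
    rewrite dexp_mass /dexp big1 => [|p _]; last by rewrite mulr0.
    by rewrite subr0 lerBlDr lerDl expR_ge0.
  move=> b /eqP b_size /negP[] /=.
  have : mean b f <= B by apply: mean_le => [|a]; [rewrite b_size | case/andP: (f_bnd a)].
  lra.
have B_gt0 : 0 < B by apply: le_lt_trans eps_lt_B.
(* [lam] minimizes the Chernoff exponent [- lam eps + 2 lam^2 B^2]. *)
pose lam := eps / (4 * B ^+ 2).
have lam_ge0 : 0 <= lam by rewrite /lam divr_ge0 // mulr_ge0 ?sqr_ge0.
have lamB : lam * B <= 1 / 2.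
  have -> : lam * B = eps / (4 * B) by rewrite /lam; field; rewrite gt_eqF.
  by rewrite ler_pdivrMr ?mulr_gt0 //; lra.
pose G b := expR (- (lam * s%:R * eps)) * \prod_(a <- b) expR (lam * (f a - m)).
apply: le_trans (dprob_markov (G := G) d_size _ _); first last.
- move=> b /eqP b_size; rewrite -ltNge /G prod_expR_mean ?b_size // -expRD => bad.
  have lam_s_ge0 : 0 <= lam * s%:R by rewrite mulr_ge0 ?ler0n.
  by rewrite -[leLHS]expR0 ler_expR -mulrN -mulrDr mulr_ge0 //; lra.
- by move=> b _; rewrite mulr_ge0 ?expR_ge0 // prodr_ge0 // => a _; rewrite expR_ge0.
rewrite dexp_mass lerD2l lerN2 /G dexpZ dexp_prod.
have mean_le := mean_expR_le w_gt0 f_bnd lam_ge0 lamB.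
apply: le_trans (ler_wpM2l (expR_ge0 _) (lerXn2r s _ _ mean_le)) _.
- by rewrite nnegrE mean_ge0 // => a; rewrite expR_ge0.
- by rewrite nnegrE expR_ge0.
rewrite -expRM_natl -expRD ler_expR.
have -> : - (lam * s%:R * eps) + s%:R * (2 * lam ^+ 2 * B ^+ 2) =
          - (s%:R * eps ^+ 2 / (8 * B ^+ 2)).
  by rewrite /lam; field; rewrite gt_eqF.
by rewrite lerN2 ler_pdivlMr ?mulr_gt0 ?exprn_gt0 // mulrC.
Qed.

End SamplingWithReplacement.

Section RSx.
Variables (R : realType) (Z : Type) (s : nat) (z : nat -> Z).

Definition stream_prefix (k : nat) : seq Z := [seq z i | i <- iota 1 k].

Lemma size_stream_prefix k : size (stream_prefix k) = k.
Proof. by rewrite size_map size_iota. Qed.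

Lemma stream_prefixS k : stream_prefix k.+1 = rcons (stream_prefix k) (z k.+1).
Proof. by rewrite /stream_prefix -map_rcons -cats1 -(addn1 k) iotaD add1n addn1. Qed.

Lemma rsx_buffer_prefix k : (k <= s)%N -> rsx_buffer R s z k = dret R (stream_prefix k).
Proof.
elim: k => [|k IH] k_le; first by [].
rewrite [LHS]/= IH ?(ltnW k_le) // /dbind /= /rsx_step size_stream_prefix k_le.
by rewrite cats0 /dret /= mul1r stream_prefixS.
Qed.

Lemma rsx_step_full tau zt (b : seq Z) : size b = s ->
  rsx_step R s tau zt b =
    if tau == s.+1 then rsx_resample R s zt b else rsx_coins R tau zt b.
Proof. by move=> b_size; rewrite /rsx_step b_size ltnn. Qed.

Lemma dist_on_rsx_coins tau zt (b : seq Z) :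
  dist_on (fun b' => size b' == size b) (rsx_coins R tau zt b).
Proof.
elim: b => [|x b IH]; first exact: dist_on_dret.
apply: dist_on_bind IH _ => b' /eqP b'_size; rewrite /dist_on /= b'_size eqxx !andbT.
have tau_inv_le1 : tau%:R^-1 <= 1 :> R.
  by case: tau => [|tau]; rewrite ?invr0 // invf_le1 ?ltr0n // ler1n.
by rewrite subr_ge0 tau_inv_le1 invr_ge0 ler0n.
Qed.

Lemma dist_on_rsx_resample zt (b : seq Z) :
  dist_on (fun b' => size b' == s) (rsx_resample R s zt b).
Proof.
rewrite /dist_on /rsx_resample all_map; apply/allP => f _ /=.
by rewrite size_map size_enum_ord eqxx andbT invr_ge0 exprn_ge0 // ler0n.
Qed.

Lemma dist_on_rsx_step tau zt (b : seq Z) : size b = s ->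
  dist_on (fun b' => size b' == s) (rsx_step R s tau zt b).
Proof.
move=> b_size; rewrite rsx_step_full //; case: eqP => _.
  exact: dist_on_rsx_resample.
by rewrite -b_size; apply: dist_on_rsx_coins.
Qed.

Lemma rsx_buffer_size k : (s <= k)%N ->
  dist_on (fun b => size b == s) (rsx_buffer R s z k).
Proof.
elim: k => [|k IH] s_le.
  by rewrite rsx_buffer_prefix //; apply: dist_on_dret; rewrite eq_sym -leqn0.
have [s_eq | k_ge_s] := eqVneq s k.+1.
  rewrite rsx_buffer_prefix; last by rewrite s_eq.
  by apply: dist_on_dret; rewrite size_stream_prefix s_eq.
apply: dist_on_bind (IH _) _ => [|b /eqP]; last exact: dist_on_rsx_step.
by rewrite -ltnS ltn_neqAle k_ge_s.
Qed.

Lemma dexp_prod_rsx_coins tau zt (b : seq Z) (g : Z -> R) :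
  dexp (rsx_coins R tau zt b) (fun b' => \prod_(x <- b') g x) =
  \prod_(x <- b) (tau%:R^-1 * g zt + (1 - tau%:R^-1) * g x).
Proof.
elim: b => [|x b IH] /=; first by rewrite dexp_dret !big_nil.
rewrite dexp_bind big_cons -IH -dexpZ; apply: eq_bigr => p _.
by congr (_ * _); rewrite /dexp /= !big_cons big_nil /=; ring.
Qed.

Lemma dexp_prod_rsx_resample zt (b : seq Z) (g : Z -> R) : size b = s ->
  dexp (rsx_resample R s zt b) (fun b' => \prod_(x <- b') g x) =
    mean (rcons b zt) g ^+ s.
Proof.
move=> b_size; rewrite /dexp /rsx_resample big_map big_enum /=.
rewrite /mean size_rcons b_size exprMn exprVn -big_distrr /=; congr (_ * _).
rewrite (big_nth zt) size_rcons b_size big_mkord.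
set S := \sum_(i < s.+1) _.
have -> : S ^+ s = \prod_(j < s) S by rewrite prodr_const card_ord.
rewrite bigA_distr_bigA /=; apply: eq_bigr => f _.
by rewrite big_map big_enum.
Qed.

Lemma dexp_prod_rsx_buffer k (g : Z -> R) : (s < k)%N ->
  dexp (rsx_buffer R s z k) (fun b => \prod_(x <- b) g x) =
    mean (stream_prefix k) g ^+ s.
Proof.
elim: k g => [|k IH] g // s_lt; rewrite [rsx_buffer _ _ _ _]/= dexp_bind.
have [<- | k_ge_s] := eqVneq s k.
  rewrite rsx_buffer_prefix // dexp_dret rsx_step_full ?size_stream_prefix //.
  by rewrite eqxx dexp_prod_rsx_resample ?size_stream_prefix // -stream_prefixS.
have s_lt_k : (s < k)%N by rewrite ltn_neqAle k_ge_s -ltnS.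
set p : R := (k.+1)%:R^-1.
rewrite (eq_dexp_on (rsx_buffer_size (ltnW s_lt_k))
  (G := fun b => \prod_(x <- b) (p * g (z k.+1) + (1 - p) * g x))); last first.
  move=> b /eqP b_size; rewrite rsx_step_full // eqSS eq_sym (negbTE k_ge_s).
  exact: dexp_prod_rsx_coins.
have k_gt0 : (0 < size (stream_prefix k))%N.
  by rewrite size_stream_prefix (leq_ltn_trans _ s_lt_k).
by rewrite IH // stream_prefixS mean_rcons // size_stream_prefix meanD !meanZ mean_cst.
Qed.

End RSx.

Lemma allpairs_risk_mean (R : realType) (Z H : Type) (l : H -> Z -> Z -> R) z k h :
  allpairs_risk l z k.+1 h = mean (stream_prefix z k) (l h (z k.+1)).
Proof.
by rewrite /allpairs_risk /mean size_stream_prefix big_map /index_iota subSS subn0.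
Qed.

Theorem lemma21 (R : realType) (B K : R) :
  exists c : R, 0 <= c /\
  forall (d : measure_display) (Z : measurableType d) (D : probability Z R)
    (H : Type) (l : H -> Z -> Z -> R) (Cd : R) (s n : nat) (z : nat -> Z)
    (h : H) (t : nat) (delta : R),
    (forall h' x y, 0 <= l h' x y <= B) ->
    (0 < s)%N ->
    1 <= Cd ->
    rademacher D l s <= Cd * (K * Num.sqrt (s%:R^-1)) ->
    (1 <= t <= n.-1)%N ->
    0 < delta < 1 ->
    1 - delta <=
      dprob (rsx_buffer R s z t.-1)
        (fun b => buffer_risk l (z t) b h
                  <= allpairs_risk l z t h
                     + Cd * (c * Num.sqrt (ln delta^-1 / s%:R))).
Proof.
exists (3 * `|B|); split; first by rewrite mulr_ge0 ?normr_ge0.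
move=> d Z D H l Cd s n z h [//|k] delta l_bnd s_gt0 Cd_ge1 _ _ /andP[delta_gt0 delta_lt1].
have B_ge0 : 0 <= B by case/andP: (l_bnd h (z 0%N) (z 0%N)); apply: le_trans.
rewrite ger0_norm // allpairs_risk_mean /=.
set a := ln delta^-1; set eps := Cd * _.
have a_ge0 : 0 <= a by rewrite ln_ge0 // invf_ge1 // ltW.
have eps_ge0 : 0 <= eps by rewrite !mulr_ge0 ?sqrtr_ge0 //; lra.
have [k_le_s | s_lt_k] := leqP k s.
  by rewrite rsx_buffer_prefix // dprob_dret lerDl eps_ge0; lra.
have -> : delta = expR (- a) by rewrite /a lnV ?posrE ?invr_gt0 // opprK lnK.
apply: (dprob_mean_le_mean_add s_gt0 _ (rsx_buffer_size _ z (ltnW s_lt_k))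
          (fun g => dexp_prod_rsx_buffer z g s_lt_k)) => //.
  by rewrite size_stream_prefix (leq_ltn_trans _ s_lt_k).
have -> : s%:R * eps ^+ 2 = 9 * Cd ^+ 2 * (B ^+ 2 * a).
  rewrite /eps !exprMn sqr_sqrtr ?divr_ge0 ?ler0n //.
  by field; rewrite pnatr_eq0 -lt0n.
have Cd2_ge1 : 1 <= Cd ^+ 2 by rewrite exprn_ege1.
by rewrite -mulrA ler_wpM2r ?mulr_ge0 ?sqr_ge0 //; lra.
Qed.
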